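(* Let $R$ be a commutative ring. Then $R$ is locally stable if and only if for every $c\in R$ and every $u\in R$ whose image $\overline{u}$ is a unit of $R/cR$, there exists a stable element $a\in R$ with $u-a\in cR$.
   Context: All rings are commutative with identity. A ring $S$ has stable range 1 if whenever $a,b\in S$ with $aS+bS=S$ there is $y\in S$ with $a+by$ a unit. An element $a\in R$ is stable if $R/aR$ has stable range 1. $R$ is locally stable if whenever $a,b\in R$ with $aR+bR=R$ there is $y\in R$ such that $R/(a+by)R$ has stable range 1. *)

From mathcomp Require Import all_boot all_algebra.
Set Implicit Arguments. Unset Strict Implicit. Unset Printing Implicit Defensive.
Import GRing.Theory.
Local Open Scope ring_scope.

Definition in_pideal (R : comPzRingType) (c x : R) : Prop := exists r : R, x = c * r.

Definition eqmod (R : comPzRingType) (c x y : R) : Prop := in_pideal c (x - y).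

Definition unit_mod (R : comPzRingType) (c u : R) : Prop :=
  exists w : R, eqmod c (u * w) 1.

(* [sr1_mod c]: the quotient ring R/cR has stable range 1.  Elements of R/cR
   are represented by elements of R, equalities in R/cR are congruences mod cR:
   whenever abar (R/cR) + bbar (R/cR) = R/cR, there is ybar with
   abar + bbar ybar a unit of R/cR. *)
Definition sr1_mod (R : comPzRingType) (c : R) : Prop :=
  forall a b : R, (exists x y : R, eqmod c (a * x + b * y) 1) ->
    exists y : R, unit_mod c (a + b * y).

Definition stable_elt (R : comPzRingType) (a : R) : Prop := sr1_mod a.

Definition locally_stable (R : comPzRingType) : Prop :=
  forall a b : R, (exists x y : R, a * x + b * y = 1) ->
    exists y : R, stable_elt (a + b * y).

From mathcomp Require Import all_boot all_algebra.
From mathcomp Require Import ring.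
Set Implicit Arguments. Unset Strict Implicit. Unset Printing Implicit Defensive.
Import GRing.Theory.
Local Open Scope ring_scope.

(* Both sides say that every comaximal pair (u, c) admits a stable element of
   the coset u + cR: a unit of R/cR is exactly an element comaximal with c, and
   the elements congruent to u mod cR are exactly the u + c y. *)

Section PrincipalIdealCosets.

Variable R : comPzRingType.
Implicit Types a c u : R.

Lemma unit_modP c u : unit_mod c u <-> exists x y : R, u * x + c * y = 1.
Proof.
split=> [[x [r Hr]] | [x [y Hxy]]].
- by exists x, (- r); rewrite mulrN -[u * x](subrK 1) Hr; ring.
- by exists x, (- y); rewrite -Hxy; ring.
Qed.

Lemma in_pideal_subP c u a : in_pideal c (u - a) <-> exists y : R, a = u + c * y.
Proof.
split=> [[r Hr] | [y ->]].
- by exists (- r); rewrite mulrN -Hr; ring.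
- by exists (- y); ring.
Qed.

End PrincipalIdealCosets.

Theorem proposition2p1 (R : comPzRingType) :
  locally_stable R <->
  (forall c u : R, unit_mod c u ->
     exists a : R, stable_elt a /\ in_pideal c (u - a)).
Proof.
split=> [LS c u /unit_modP comax | H a b comax].
- have [y Sy] := LS u c comax.
  by exists (u + c * y); split=> //; apply/in_pideal_subP; exists y.
- have [a' [Sa' /in_pideal_subP [y Ea']]] := H b a ((unit_modP b a).2 comax).
  by exists y; rewrite -Ea'.
Qed.
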